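(* Let $T$ and $T'$ be Morita context rings. If the Morita context with which $T$ is associated, or the one with which $T'$ is associated, is strict, then $\mathrm{Iso}_0(T,T')\subseteq\mathrm{Iso}_g(T,T')$. More precisely, every element of $\mathrm{Iso}_0^0(T,T')$ is graded and every element of $\mathrm{Iso}_0^1(T,T')$ is anti-graded.
   Context: All rings have an identity $1\neq 0$. A Morita context $(R,S,M,N,f,g)$: rings $R,S$, an $R$-$S$-bimodule $M$, an $S$-$R$-bimodule $N$, bimodule morphisms $f:M\otimes_SN\to R$, $g:N\otimes_RM\to S$, with $[m,n]=f(m\otimes n)$, $(n,m)=g(n\otimes m)$ satisfying $[m,n]m'=m(n,m')$ and $n[m,n']=(n,m)n'$. The context is strict if $f$ and $g$ are surjective. Its Morita context ring $T=\left[\begin{smallmatrix} R & M\\ N & S\end{smallmatrix}\right]$ consists of formal matrices with entrywise addition and product $\left[\begin{smallmatrix} r & m\\ n & s\end{smallmatrix}\right]\left[\begin{smallmatrix} r' & m'\\ n' & s'\end{smallmatrix}\right]=\left[\begin{smallmatrix} rr'+[m,n'] & rm'+ms'\\ nr'+sn' & (n,m')+ss'\end{smallmatrix}\right]$; $T'=\left[\begin{smallmatrix} R' & M'\\ N' & S'\end{smallmatrix}\right]$ similarly. $T$ is $\mathbb Z$-graded with $T_{-1}=\left[\begin{smallmatrix} 0 & 0\\ N & 0\end{smallmatrix}\right]$, $T_0=\left[\begin{smallmatrix} R & 0\\ 0 & S\end{smallmatrix}\right]$, $T_1=\left[\begin{smallmatrix} 0 & M\\ 0 & 0\end{smallmatrix}\right]$,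 $T_i=0$ otherwise. A ring isomorphism $\phi:T\to T'$ is graded if $\phi(T_i)\subseteq T'_i$ for all $i$, anti-graded if $\phi(T_i)\subseteq T'_{-i}$ for all $i$; $\mathrm{Iso}_g(T,T')$ is the set of all graded and all anti-graded isomorphisms. $\mathrm{Iso}_0(T,T')=\mathrm{Iso}_0^0(T,T')\cup\mathrm{Iso}_0^1(T,T')$, where $\mathrm{Iso}_0^0(T,T')$ is the set of maps $\phi\left(\left[\begin{smallmatrix} r & m\\ n & s\end{smallmatrix}\right]\right)=\left[\begin{smallmatrix}\gamma(r) & \gamma(r)m'_0-m'_0\delta(s)+u(m)\\ n'_0\gamma(r)-\delta(s)n'_0+v(n) & \delta(s)\end{smallmatrix}\right]$ with $\gamma:R\to R'$, $\delta:S\to S'$ ring isomorphisms, $u:M\to M'$, $v:N\to N'$ additive bijections with $u(rms)=\gamma(r)u(m)\delta(s)$, $v(snr)=\delta(s)v(n)\gamma(r)$, and $m'_0\in M'$, $n'_0\in N'$ with $[m'_0,N']=0$, $(N',m'_0)=0$, $[M',n'_0]=0$, $(n'_0,M')=0$, $[u(m),v(n)]=\gamma([m,n])$, $(v(n),u(m))=\delta((n,m))$; and $\mathrm{Iso}_0^1(T,T')$ is the set of maps $\psi\left(\left[\begin{smallmatrix} r & m\\ n & s\end{smallmatrix}\right]\right)=\left[\begin{smallmatrix}\sigma(s) & m'_*\rho(r)-\sigma(s)m'_*+\nu(n)\\ \rho(r)n'_*-n'_*\sigma(s)+\mu(m) & \rho(r)\end{smallmatrix}\right]$ with $\rho:R\to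 S'$, $\sigma:S\to R'$ ring isomorphisms, $\mu:M\to N'$, $\nu:N\to M'$ additive bijections with $\mu(rms)=\rho(r)\mu(m)\sigma(s)$, $\nu(snr)=\sigma(s)\nu(n)\rho(r)$, and $m'_*\in M'$, $n'_*\in N'$ with $[m'_*,N']=0$, $(N',m'_* )=0$, $[M',n'_*]=0$, $(n'_*,M')=0$, $(\mu(m),\nu(n))=\rho([m,n])$, $[\nu(n),\mu(m)]=\sigma((n,m))$. *)

From HB Require Import structures.
From mathcomp Require Import all_boot all_order all_algebra.
Set Implicit Arguments. Unset Strict Implicit. Unset Printing Implicit Defensive.
Import GRing.Theory.
Local Open Scope ring_scope.

(* The bimodule actions are given as explicit functions; the bimodule
   morphisms f : M (x)_S N -> R and g : N (x)_R M -> S are given, via the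
   universal property of the tensor product, as biadditive balanced maps
   [m,n] = pMN m n and (n,m) = pNM n m that are bimodule morphisms. *)
Record morita_context := MoritaContext {
  mc_R : nzRingType;
  mc_S : nzRingType;
  mc_M : zmodType;
  mc_N : zmodType;
  lM : mc_R -> mc_M -> mc_M;
  rM : mc_M -> mc_S -> mc_M;
  lN : mc_S -> mc_N -> mc_N;
  rN : mc_N -> mc_R -> mc_N;
  pMN : mc_M -> mc_N -> mc_R;
  pNM : mc_N -> mc_M -> mc_S;
  lM_mul : forall r r' m, lM (r * r') m = lM r (lM r' m);
  lM_one : forall m, lM 1 m = m;
  lM_addl : forall r r' m, lM (r + r') m = lM r m + lM r' m;
  lM_addr : forall r m m', lM r (m + m') = lM r m + lM r m';
  rM_mul : forall m s s', rM m (s * s') = rM (rM m s) s';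
  rM_one : forall m, rM m 1 = m;
  rM_addl : forall m m' s, rM (m + m') s = rM m s + rM m' s;
  rM_addr : forall m s s', rM m (s + s') = rM m s + rM m s';
  lrM : forall r m s, rM (lM r m) s = lM r (rM m s);
  lN_mul : forall s s' n, lN (s * s') n = lN s (lN s' n);
  lN_one : forall n, lN 1 n = n;
  lN_addl : forall s s' n, lN (s + s') n = lN s n + lN s' n;
  lN_addr : forall s n n', lN s (n + n') = lN s n + lN s n';
  rN_mul : forall n r r', rN n (r * r') = rN (rN n r) r';
  rN_one : forall n, rN n 1 = n;
  rN_addl : forall n n' r, rN (n + n') r = rN n r + rN n' r;
  rN_addr : forall n r r', rN n (r + r') = rN n r + rN n r';
  lrN : forall s n r, rN (lN s n) r = lN s (rN n r);
  (* f : M (x)_S N -> R is a well-defined R-R-bimodule morphism *)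
  pMN_addl : forall m m' n, pMN (m + m') n = pMN m n + pMN m' n;
  pMN_addr : forall m n n', pMN m (n + n') = pMN m n + pMN m n';
  pMN_bal : forall m s n, pMN (rM m s) n = pMN m (lN s n);
  pMN_lin_l : forall r m n, pMN (lM r m) n = r * pMN m n;
  pMN_lin_r : forall m n r, pMN m (rN n r) = pMN m n * r;
  (* g : N (x)_R M -> S is a well-defined S-S-bimodule morphism *)
  pNM_addl : forall n n' m, pNM (n + n') m = pNM n m + pNM n' m;
  pNM_addr : forall n m m', pNM n (m + m') = pNM n m + pNM n m';
  pNM_bal : forall n r m, pNM (rN n r) m = pNM n (lM r m);
  pNM_lin_l : forall s n m, pNM (lN s n) m = s * pNM n m;
  pNM_lin_r : forall n m s, pNM n (rM m s) = pNM n m * s;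
  assocM : forall m n m', lM (pMN m n) m' = rM m (pNM n m');
  assocN : forall n m n', rN n (pMN m n') = lN (pNM n m) n'
}.

(* strict: f and g surjective.  The image of f : M (x)_S N -> R consists of
   the finite sums of elements [m,n]; likewise for g. *)
Definition mc_strict (C : morita_context) : Prop :=
  (forall r : mc_R C, exists l : seq (mc_M C * mc_N C),
      r = \sum_(p <- l) pMN p.1 p.2) /\
  (forall s : mc_S C, exists l : seq (mc_N C * mc_M C),
      s = \sum_(p <- l) pNM p.1 p.2).

(* Elements of the Morita context ring T = [R M; N S]. *)
Record mc_elt (C : morita_context) := MkElt {
  e11 : mc_R C; e12 : mc_M C; e21 : mc_N C; e22 : mc_S C }.

Definition mc_add C (x y : mc_elt C) : mc_elt C :=
  MkElt (e11 x + e11 y) (e12 x + e12 y) (e21 x + e21 y) (e22 x + e22 y).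

Definition mc_mul C (x y : mc_elt C) : mc_elt C :=
  MkElt (e11 x * e11 y + pMN (e12 x) (e21 y))
        (lM (e11 x) (e12 y) + rM (e12 x) (e22 y))
        (rN (e21 x) (e11 y) + lN (e22 x) (e21 y))
        (pNM (e21 x) (e12 y) + e22 x * e22 y).

Definition mc_one C : mc_elt C := MkElt 1 0 0 1.

Definition mc_ring_iso (C C' : morita_context) (phi : mc_elt C -> mc_elt C') : Prop :=
  (forall x y, phi (mc_add x y) = mc_add (phi x) (phi y)) /\
  (forall x y, phi (mc_mul x y) = mc_mul (phi x) (phi y)) /\
  phi (mc_one C) = mc_one C' /\
  bijective phi.

Definition mc_homog C (i : int) (x : mc_elt C) : Prop :=
  if i == 0 then e12 x = 0 /\ e21 x = 0
  else if i == 1 then e11 x = 0 /\ e21 x = 0 /\ e22 x = 0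
  else if i == -1 then e11 x = 0 /\ e12 x = 0 /\ e22 x = 0
  else x = MkElt 0 0 0 0.

Definition mc_graded (C C' : morita_context) (phi : mc_elt C -> mc_elt C') : Prop :=
  mc_ring_iso phi /\ forall (i : int) x, mc_homog i x -> mc_homog i (phi x).

Definition mc_antigraded (C C' : morita_context) (phi : mc_elt C -> mc_elt C') : Prop :=
  mc_ring_iso phi /\ forall (i : int) x, mc_homog i x -> mc_homog (- i) (phi x).

Definition mc_Iso00 (C C' : morita_context) (phi : mc_elt C -> mc_elt C') : Prop :=
  exists (gam : {rmorphism mc_R C -> mc_R C'}) (del : {rmorphism mc_S C -> mc_S C'})
         (u : mc_M C -> mc_M C') (v : mc_N C -> mc_N C')
         (m0 : mc_M C') (n0 : mc_N C'),
    (bijective gam /\ bijective del /\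
        {morph u : x y / x + y} /\ bijective u /\
        {morph v : x y / x + y} /\ bijective v /\
        (forall r m s, u (rM (lM r m) s) = rM (lM (gam r) (u m)) (del s)) /\
        (forall s n r, v (rN (lN s n) r) = rN (lN (del s) (v n)) (gam r)) /\
     (forall n' : mc_N C', pMN m0 n' = 0) /\
         (forall n' : mc_N C', pNM n' m0 = 0) /\
         (forall m' : mc_M C', pMN m' n0 = 0) /\
         (forall m' : mc_M C', pNM n0 m' = 0) /\
         (forall m n, pMN (u m) (v n) = gam (pMN m n)) /\
         (forall m n, pNM (v n) (u m) = del (pNM n m)) /\
         (forall r m n s, phi (MkElt r m n s) =
            MkElt (gam r)
                  (lM (gam r) m0 - rM m0 (del s) + u m)
                  (rN n0 (gam r) - lN (del s) n0 + v n)
                  (del s))).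

Definition mc_Iso01 (C C' : morita_context) (psi : mc_elt C -> mc_elt C') : Prop :=
  exists (rho : {rmorphism mc_R C -> mc_S C'}) (sig : {rmorphism mc_S C -> mc_R C'})
         (mu : mc_M C -> mc_N C') (nu : mc_N C -> mc_M C')
         (ms : mc_M C') (ns : mc_N C'),
    (bijective rho /\ bijective sig /\
        {morph mu : x y / x + y} /\ bijective mu /\
        {morph nu : x y / x + y} /\ bijective nu /\
        (forall r m s, mu (rM (lM r m) s) = rN (lN (rho r) (mu m)) (sig s)) /\
        (forall s n r, nu (rN (lN s n) r) = rM (lM (sig s) (nu n)) (rho r)) /\
     (forall n' : mc_N C', pMN ms n' = 0) /\
         (forall n' : mc_N C', pNM n' ms = 0) /\
         (forall m' : mc_M C', pMN m' ns = 0) /\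
         (forall m' : mc_M C', pNM ns m' = 0) /\
         (forall m n, pNM (mu m) (nu n) = rho (pMN m n)) /\
         (forall m n, pMN (nu n) (mu m) = sig (pNM n m)) /\
         (forall r m n s, psi (MkElt r m n s) =
            MkElt (sig s)
                  (rM ms (rho r) - lM (sig s) ms + nu n)
                  (lN (rho r) ns - rN ns (sig s) + mu m)
                  (rho r))).

From HB Require Import structures.
From mathcomp Require Import all_boot all_order all_algebra.
Set Implicit Arguments. Unset Strict Implicit. Unset Printing Implicit Defensive.
Import GRing.Theory.
Local Open Scope ring_scope.

(* The key observation is that
   an element m0 annihilated by (N',_) is killed by left multiplication with
   every finite sum of brackets [m,n], since [m,n] m0 = m (n,m0) = 0
   ([span_lM_annihilated] and its three companions).  If either context is
   strict, every g r and every d s is such a sum ([image_spanR]), so the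
   correction terms vanish and the map is the "diagonal" map
   [r m; n s] |-> [g r, u m; v n, d s], which is a graded ring isomorphism
   (section [DiagonalIso]).  Iso_0^1 is reduced to Iso_0^0 by the symmetry
   [swapC] exchanging the roles of (R,M) and (S,N) in the target context:
   composing with the swap [swE] turns Iso_0^1 into Iso_0^0 and graded maps
   into anti-graded ones. *)

Lemma additive_fun0 (U V : zmodType) (f : U -> V) :
  {morph f : x y / x + y} -> f 0 = 0.
Proof. by move=> fD; apply: (@addrI _ (f 0)); rewrite -fD !addr0. Qed.

Definition swapC (C : morita_context) : morita_context :=
  @MoritaContext (mc_S C) (mc_R C) (mc_N C) (mc_M C)
    (@lN C) (@rN C) (@lM C) (@rM C) (@pNM C) (@pMN C)
    (@lN_mul C) (@lN_one C) (@lN_addl C) (@lN_addr C)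
    (@rN_mul C) (@rN_one C) (@rN_addl C) (@rN_addr C) (@lrN C)
    (@lM_mul C) (@lM_one C) (@lM_addl C) (@lM_addr C)
    (@rM_mul C) (@rM_one C) (@rM_addl C) (@rM_addr C) (@lrM C)
    (@pNM_addl C) (@pNM_addr C) (@pNM_bal C) (@pNM_lin_l C) (@pNM_lin_r C)
    (@pMN_addl C) (@pMN_addr C) (@pMN_bal C) (@pMN_lin_l C) (@pMN_lin_r C)
    (fun a b c => esym (@assocN C a b c)) (fun a b c => esym (@assocM C a b c)).

Definition spanR (C : morita_context) (r : mc_R C) : Prop :=
  exists l : seq (mc_M C * mc_N C), r = \sum_(p <- l) pMN p.1 p.2.
Definition spanS (C : morita_context) (s : mc_S C) : Prop :=
  exists l : seq (mc_N C * mc_M C), s = \sum_(p <- l) pNM p.1 p.2.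

Lemma strict_swap (C : morita_context) : mc_strict C -> mc_strict (swapC C).
Proof. by case. Qed.

Section Annihilators.
Variable C : morita_context.

Lemma lM0l (m : mc_M C) : lM 0 m = 0.
Proof. exact: (additive_fun0 (fun r => lM_addl r ^~ m)). Qed.
Lemma rM0r (m : mc_M C) : rM m 0 = 0.
Proof. exact: (additive_fun0 (@rM_addr C m)). Qed.

(* If (N,m0) = 0 then [m,n] m0 = m (n,m0) = 0, hence I m0 = 0 for the
   image I of f. *)
Lemma span_lM_annihilated (m0 : mc_M C) (r : mc_R C) :
  (forall n, pNM n m0 = 0) -> spanR r -> lM r m0 = 0.
Proof.
move=> m0_ann [l ->]; elim: l => [|p l IH]; first by rewrite big_nil lM0l.
by rewrite big_cons lM_addl IH assocM m0_ann rM0r addr0.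
Qed.

Lemma span_rM_annihilated (m0 : mc_M C) (s : mc_S C) :
  (forall n, pMN m0 n = 0) -> spanS s -> rM m0 s = 0.
Proof.
move=> m0_ann [l ->]; elim: l => [|p l IH]; first by rewrite big_nil rM0r.
by rewrite big_cons rM_addr IH -assocM m0_ann lM0l addr0.
Qed.

End Annihilators.

Lemma span_rN_annihilated (C : morita_context) (n0 : mc_N C) (r : mc_R C) :
  (forall m, pNM n0 m = 0) -> spanR r -> rN n0 r = 0.
Proof. exact: (@span_rM_annihilated (swapC C)). Qed.

Lemma span_lN_annihilated (C : morita_context) (n0 : mc_N C) (s : mc_S C) :
  (forall m, pMN m n0 = 0) -> spanS s -> lN s n0 = 0.
Proof. exact: (@span_lM_annihilated (swapC C)). Qed.

(* A map g compatible with the brackets ([u m, v n] = g [m,n]) carries the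
   image of f into the image of f'; so if either context is strict, every
   g r lies in the image of f'. *)
Lemma image_spanR (C C' : morita_context) (gam : {rmorphism mc_R C -> mc_R C'})
    (u : mc_M C -> mc_M C') (v : mc_N C -> mc_N C') :
  (forall m n, pMN (u m) (v n) = gam (pMN m n)) ->
  mc_strict C \/ mc_strict C' -> forall r, spanR (gam r).
Proof.
move=> uv [[spanC _]|[spanC' _]] r; last exact: spanC'.
have [l ->] := spanC r; exists [seq (u p.1, v p.2) | p <- l].
by rewrite rmorph_sum big_map; apply: eq_bigr => p _; rewrite uv.
Qed.

Section DiagonalIso.
Variables (C C' : morita_context).
Variables (gam : {rmorphism mc_R C -> mc_R C'}) (del : {rmorphism mc_S C -> mc_S C'}).
Variables (u : mc_M C -> mc_M C') (v : mc_N C -> mc_N C').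
Hypotheses (gam_bij : bijective gam) (del_bij : bijective del).
Hypotheses (uD : {morph u : x y / x + y}) (u_bij : bijective u).
Hypotheses (vD : {morph v : x y / x + y}) (v_bij : bijective v).
Hypothesis u_semilin : forall r m s, u (rM (lM r m) s) = rM (lM (gam r) (u m)) (del s).
Hypothesis v_semilin : forall s n r, v (rN (lN s n) r) = rN (lN (del s) (v n)) (gam r).
Hypothesis uv_bracket : forall m n, pMN (u m) (v n) = gam (pMN m n).
Hypothesis vu_bracket : forall m n, pNM (v n) (u m) = del (pNM n m).
Variable phi : mc_elt C -> mc_elt C'.
Hypothesis phi_diag :
  forall r m n s, phi (MkElt r m n s) = MkElt (gam r) (u m) (v n) (del s).

Let u0 : u 0 = 0 := additive_fun0 uD.
Let v0 : v 0 = 0 := additive_fun0 vD.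

Let uL r m : u (lM r m) = lM (gam r) (u m).
Proof. by have := u_semilin r m 1; rewrite !rM_one rmorph1 rM_one. Qed.
Let uR m s : u (rM m s) = rM (u m) (del s).
Proof. by have := u_semilin 1 m s; rewrite !lM_one rmorph1 lM_one. Qed.
Let vL s n : v (lN s n) = lN (del s) (v n).
Proof. by have := v_semilin s n 1; rewrite !rN_one rmorph1 rN_one. Qed.
Let vR n r : v (rN n r) = rN (v n) (gam r).
Proof. by have := v_semilin 1 n r; rewrite !lN_one rmorph1 lN_one. Qed.

(* Multiplicativity uses semilinearity on the off-diagonal entries and
   bracket compatibility on the diagonal ones. *)
Lemma diag_ring_iso : mc_ring_iso phi.
Proof.
split; [|split; [|split]].
- by move=> [r m n s] [r' m' n' s']; rewrite /mc_add /= !phi_diag /= !rmorphD uD vD.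
- move=> [r m n s] [r' m' n' s'].
  by rewrite /mc_mul /= !phi_diag /= !rmorphD !rmorphM uD vD uL uR vR vL uv_bracket vu_bracket.
- by rewrite /mc_one phi_diag !rmorph1 u0 v0.
case: gam_bij => gi g1 g2; case: del_bij => di d1 d2.
case: u_bij => ui u1 u2; case: v_bij => vi w1 w2.
exists (fun y => MkElt (gi (e11 y)) (ui (e12 y)) (vi (e21 y)) (di (e22 y))).
  by move=> [r m n s]; rewrite phi_diag /= g1 u1 w1 d1.
by move=> [r m n s]; rewrite /= phi_diag g2 u2 w2 d2.
Qed.

Lemma diag_graded : mc_graded phi.
Proof.
split; first exact: diag_ring_iso.
move=> i [r m n s]; rewrite /mc_homog phi_diag /=.
case: (i == 0); first by move=> [-> ->]; rewrite u0 v0.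
case: (i == 1); first by move=> [-> [-> ->]]; rewrite v0 !rmorph0.
case: (i == -1); first by move=> [-> [-> ->]]; rewrite u0 !rmorph0.
by case=> -> -> -> ->; rewrite u0 v0 !rmorph0.
Qed.
End DiagonalIso.

Lemma iso00_graded (C C' : morita_context) (phi : mc_elt C -> mc_elt C') :
  mc_strict C \/ mc_strict C' -> mc_Iso00 phi -> mc_graded phi.
Proof.
move=> strict [gam [del [u [v [m0 [n0 [gam_bij [del_bij [uD [u_bij [vD [v_bij
  [u_semilin [v_semilin [m0N [Nm0 [Mn0 [n0M [uv [vu phi_def]]]]]]]]]]]]]]]]]]]].
have spanR_gam := image_spanR uv strict.
have spanS_del : forall s, spanS (del s).
  apply: (@image_spanR (swapC C) (swapC C') del v u (fun n m => vu m n)).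
  by case: strict => /strict_swap; [left|right].
apply: (diag_graded gam_bij del_bij uD u_bij vD v_bij u_semilin v_semilin uv vu).
move=> r m n s; rewrite phi_def.
rewrite span_lM_annihilated // span_rM_annihilated //.
rewrite span_rN_annihilated // span_lN_annihilated //.
by rewrite !subr0 !add0r.
Qed.

Definition swE (C : morita_context) (y : mc_elt C) : mc_elt (swapC C) :=
  @MkElt (swapC C) (e22 y) (e21 y) (e12 y) (e11 y).

Section Swap.
Variable C : morita_context.

Lemma swE_inj : injective (@swE C).
Proof. by move=> [????] [????] [-> -> -> ->]. Qed.

Lemma swE_add (x y : mc_elt C) : swE (mc_add x y) = mc_add (swE x) (swE y).
Proof. by []. Qed.

Lemma swE_mul (x y : mc_elt C) : swE (mc_mul x y) = mc_mul (swE x) (swE y).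
Proof.
by case: x y => [????] [????]; rewrite /swE /mc_mul /=; congr MkElt; rewrite addrC.
Qed.

Lemma swE_one : swE (mc_one C) = mc_one (swapC C).
Proof. by []. Qed.

Lemma swE_homog (i : int) (x : mc_elt C) : mc_homog i (swE x) -> mc_homog (- i) x.
Proof.
case: x => a b c d; rewrite /mc_homog /swE /=.
have [->|i_neq0] := eqVneq i 0; first by rewrite oppr0 eqxx => -[-> ->].
have [->|i_neq1] := eqVneq i 1.
  by rewrite (_ : - 1 == 0 :> int = false) // (_ : - 1 == 1 :> int = false) // eqxx
    => -[-> [-> ->]].
have [->|i_neqN1] := eqVneq i (-1).
  by rewrite opprK oner_eq0 eqxx => -[-> [-> ->]].
rewrite oppr_eq0 (negbTE i_neq0) eqr_opp (negbTE i_neq1) eqr_oppLR (negbTE i_neqN1).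
by case=> -> -> -> ->.
Qed.
End Swap.

Lemma iso01_swap (C C' : morita_context) (psi : mc_elt C -> mc_elt C') :
  mc_Iso01 psi -> mc_Iso00 (fun x => swE (psi x)).
Proof.
move=> [rho [sig [mu [nu [ms [ns [rho_bij [sig_bij [muD [mu_bij [nuD [nu_bij
  [mu_semilin [nu_semilin [msN [Nms [Mns [nsM [munu [numu psi_def]]]]]]]]]]]]]]]]]]]].
exists rho, sig, mu, nu, ns, ms.
do 14 (split; first by []).
by move=> r m n s; rewrite psi_def.
Qed.

Lemma swap_graded_antigraded (C C' : morita_context) (psi : mc_elt C -> mc_elt C') :
  mc_graded (fun x => swE (psi x)) -> mc_antigraded psi.
Proof.
move=> [[psiD [psiM [psi1 [g g_can g_can']]]] homog].
have swK := @swE_inj C'.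
split; last by move=> i x /homog /swE_homog.
split; [|split; [|split]].
- by move=> x y; apply: swK; rewrite psiD swE_add.
- by move=> x y; apply: swK; rewrite psiM swE_mul.
- by apply: swK; rewrite psi1 swE_one.
exists (fun y => g (swE y)) => [x|y]; first by rewrite g_can.
by apply: swK; rewrite g_can'.
Qed.

Theorem proposition3p1 (C C' : morita_context) :
  mc_strict C \/ mc_strict C' ->
  (forall phi : mc_elt C -> mc_elt C', mc_Iso00 phi -> mc_graded phi) /\
  (forall psi : mc_elt C -> mc_elt C', mc_Iso01 psi -> mc_antigraded psi).
Proof.
move=> strict; split=> [phi|psi]; first exact: iso00_graded.
move=> /iso01_swap iso00; apply: swap_graded_antigraded.
by apply: iso00_graded iso00; case: strict => [|/strict_swap]; [left|right].
Qed.
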